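(* Let $G$ and $H$ be connected nontrivial graphs, let $u,x\in V(G)$ and $v,y\in V(H)$. Then $(u,v)$ and $(x,y)$ are mutually maximally distant vertices in the strong product $G\boxtimes H$ if and only if one of the following conditions holds: (i) $u,x$ are mutually maximally distant in $G$ and $v,y$ are mutually maximally distant in $H$; (ii) $u,x$ are mutually maximally distant in $G$ and $v=y$; (iii) $v,y$ are mutually maximally distant in $H$ and $u=x$; (iv) $u,x$ are mutually maximally distant in $G$ and $d_G(u,x)>d_H(v,y)$; (v) $v,y$ are mutually maximally distant in $H$ and $d_G(u,x)<d_H(v,y)$.
   Context: All graphs are simple; $d_G$ denotes the shortest-path distance in $G$, and $N_G(u)$ the open neighborhood of $u$. A vertex $u$ is maximally distant from $v$ in $G$ if for every $w\in N_G(u)$, $d_G(v,w)\le d_G(u,v)$; $u$ and $v$ are mutually maximally distant if $u$ is maximally distant from $v$ and $v$ is maximally distant from $u$. The strong product $G\boxtimes H$ has vertex set $V(G)\times V(H)$, with $(a,b)$ and $(c,d)$ adjacent iff either ($a=c$ and $bd\in E(H)$), or ($ac\in E(G)$ and $b=d$), or ($ac\in E(G)$ and $bd\in E(H)$). A graph is nontrivial if it has at least two vertices. *)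

From mathcomp Require Import all_boot.
Set Implicit Arguments. Unset Strict Implicit. Unset Printing Implicit Defensive.

(* A simple graph on a finite vertex type T is a symmetric irreflexive
   relation e : rel T (hypotheses stated in the theorem). *)

Fixpoint within (T : finType) (e : rel T) (n : nat) (x y : T) : bool :=
  match n with
  | 0 => x == y
  | n'.+1 => (x == y) || [exists z, e x z && within e n' z y]
  end.

(* Shortest-path distance: the least n such that y is reachable from x by a
   walk of length <= n (for connected graphs such n < #|T| always exists). *)
Definition dist (T : finType) (e : rel T) (x y : T) : nat :=
  find (fun n => within e n x y) (iota 0 #|T|).

Definition connected_graph (T : finType) (e : rel T) : Prop :=
  forall x y : T, connect e x y.

Definition max_dist (T : finType) (e : rel T) (u v : T) : Prop :=
  forall w, e u w -> dist e v w <= dist e u v.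

Definition mutually_max_dist (T : finType) (e : rel T) (u v : T) : Prop :=
  max_dist e u v /\ max_dist e v u.

Definition strong_prod (T1 T2 : finType) (e1 : rel T1) (e2 : rel T2)
  : rel (T1 * T2) :=
  fun p q =>
    [|| (p.1 == q.1) && e2 p.2 q.2,
        e1 p.1 q.1 && (p.2 == q.2)
      | e1 p.1 q.1 && e2 p.2 q.2].

From mathcomp Require Import all_boot.

Set Implicit Arguments.
Unset Strict Implicit.
Unset Printing Implicit Defensive.

(* Distances in the strong product are the maxima of the coordinate distances,
   and the neighbours of (u, v) are the pairs of closed neighbours of u and v
   other than (u, v) itself.  Moving one step in a coordinate whose distance is
   strictly smaller than the maximum can never increase the maximum, so (u, v)
   is maximally distant from (x, y) iff u is maximally distant from x in G
   whenever d_G(u,x) realises the maximum, and likewise in H.  Mutually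
   maximally distant vertices are distinct, hence at positive distance; this
   rules out the degenerate ties d_G(u,x) = d_H(v,y) = 0 and turns the two
   conditional statements into the five cases (i)-(v). *)

Section Walks.
Variables (T : finType) (e : rel T).

Lemma withinSE n x y :
  within e n.+1 x y = (x == y) || [exists z, e x z && within e n z y].
Proof. by []. Qed.

Lemma within_refl n x : within e n x x.
Proof. by case: n => [|n]; rewrite /= eqxx. Qed.

Lemma withinS n x y : within e n x y -> within e n.+1 x y.
Proof.
elim: n x => [|n IH] x; first by move=> /= ->.
case/orP=> [/eqP-> | /existsP[z /andP[exz wzy]]]; first exact: within_refl.
by apply/orP; right; apply/existsP; exists z; rewrite exz; exact: IH.
Qed.

Lemma within_mono m n x y : m <= n -> within e m x y -> within e n x y.
Proof. by move=> /subnK <-; elim: (n - m) => // k IH w; exact: withinS (IH w). Qed.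

Lemma within_step n x z y :
  (x == z) || e x z -> within e n z y -> within e n.+1 x y.
Proof.
case/orP=> [/eqP-> | exz] wzy; first exact: withinS.
by apply/orP; right; apply/existsP; exists z; rewrite exz.
Qed.

Lemma within_rcons n x z y : within e n x z -> e z y -> within e n.+1 x y.
Proof.
elim: n x => [|n IH] x.
  move=> /eqP-> ezy.
  by apply: (within_step (z := y)); rewrite ?ezy ?orbT ?within_refl.
case/orP=> [/eqP-> | /existsP[w /andP[exw wwz]]] ezy.
  by apply: (within_step (z := y)); rewrite ?ezy ?orbT ?within_refl.
by apply: (within_step (z := w)); rewrite ?exw ?orbT ?IH.
Qed.

Lemma within_sym : symmetric e -> forall n x y, within e n x y -> within e n y x.
Proof.
move=> sym; elim=> [|n IH] x y; first by rewrite /= eq_sym.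
case/orP=> [/eqP-> | /existsP[z /andP[exz wzy]]]; first exact: within_refl.
by apply: within_rcons (IH _ _ wzy) _; rewrite sym.
Qed.

Lemma within_distE n0 x y : n0 < #|T| -> within e n0 x y ->
  forall n, within e n x y = (dist e x y <= n).
Proof.
move=> lt_n0 w0.
have has_w : has (fun n => within e n x y) (iota 0 #|T|).
  by apply/hasP; exists n0; rewrite ?mem_iota.
have lt_d : dist e x y < #|T| by rewrite /dist -{2}(size_iota 0 #|T|) -has_find.
have w_d : within e (dist e x y) x y.
  by have := nth_find 0 has_w; rewrite nth_iota.
move=> n; apply/idP/idP => [wn | le_dn]; last exact: within_mono le_dn w_d.
rewrite leqNgt; apply/negP => lt_nd.
by have := before_find 0 lt_nd; rewrite nth_iota ?wn // (ltn_trans lt_nd).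
Qed.

Lemma dist_within m x y : m < #|T| ->
  (forall n, within e n x y = (m <= n)) -> dist e x y = m.
Proof.
move=> lt_m wE; have dE := within_distE lt_m (etrans (wE m) (leqnn m)).
by apply/eqP; rewrite eqn_leq -dE wE leqnn -wE dE leqnn.
Qed.

Lemma connect_within x y : connect e x y -> exists2 n, n < #|T| & within e n x y.
Proof.
case/connectP=> p pth ->; case: (shortenP pth) => p' pth' uniq_p' _.
exists (size p').
  by rewrite -[_ < _]/(size (x :: p') <= _) -(card_uniqP uniq_p') max_card.
elim: p' x pth' {uniq_p' pth} => [|z p' IH] x /=; first by rewrite eqxx.
by case/andP=> exz pz; apply: (within_step (z := z)); rewrite ?exz ?orbT ?IH.
Qed.

Section Connected.
Hypotheses (conn : connected_graph e) (sym : symmetric e).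

Lemma within_dist_leq n x y : within e n x y = (dist e x y <= n).
Proof.
by have [n0 lt_n0 w0] := connect_within (conn x y); exact: within_distE w0 n.
Qed.

Lemma dist_lt_card x y : dist e x y < #|T|.
Proof.
have [n0 lt_n0 w0] := connect_within (conn x y).
by apply: leq_ltn_trans lt_n0; rewrite -within_dist_leq.
Qed.

Lemma dist_xx x : dist e x x = 0.
Proof. by apply/eqP; rewrite -leqn0 -within_dist_leq within_refl. Qed.

Lemma dist_eq0 x y : (dist e x y == 0) = (x == y).
Proof. by rewrite -leqn0 -within_dist_leq. Qed.

Lemma distC x y : dist e x y = dist e y x.
Proof.
by apply/eqP; rewrite eqn_leq -!within_dist_leq; apply/andP; split;
  apply: within_sym; rewrite // within_dist_leq.
Qed.

Lemma dist_edge x a b : e a b -> dist e x b <= (dist e x a).+1.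
Proof.
by move=> eab; rewrite -within_dist_leq (within_rcons _ eab) ?within_dist_leq.
Qed.

Lemma exists_neighbour : 1 < #|T| -> forall u, exists w, e u w.
Proof.
case/card_gt1P=> a [b [_ _ neq_ab]] u.
have [t neq_tu] : exists t, t != u.
  by case: (eqVneq a u) => [eq_au | ]; [exists b; rewrite -eq_au eq_sym | exists a].
case/connectP: (conn u t) => [[|w p] /= path_p eq_t].
  by rewrite eq_t eqxx in neq_tu.
by case/andP: path_p => euw _; exists w.
Qed.

Lemma max_dist_gt0 : irreflexive e -> 1 < #|T| ->
  forall u x, max_dist e u x -> 0 < dist e u x.
Proof.
move=> irr nt u x ux_max; rewrite lt0n dist_eq0; apply/eqP => eq_ux.
rewrite -eq_ux in ux_max; have [w euw] := exists_neighbour nt u.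
have := ux_max w euw; rewrite dist_xx leqn0 dist_eq0 => /eqP eq_uw.
by rewrite eq_uw irr in euw.
Qed.

End Connected.
End Walks.

Section StrongProduct.
Variables (T1 T2 : finType) (e1 : rel T1) (e2 : rel T2).
Notation P := (strong_prod e1 e2).

Lemma strong_prod_nbr a b c d :
  P (a, b) (c, d) -> ((a == c) || e1 a c) /\ ((b == d) || e2 b d).
Proof. by rewrite /strong_prod /= => /or3P[] /andP[-> ->]; rewrite ?orbT. Qed.

Lemma within_strong_prod n a b c d :
  within P n (a, b) (c, d) = within e1 n a c && within e2 n b d.
Proof.
elim: n a b => [|n IH] a b; first by rewrite /= xpair_eqE.
apply/idP/idP.
  rewrite withinSE => /orP[/eqP[<- <-] | ]; first by rewrite !within_refl.
  case/existsP=> [[a' b'] /andP[/strong_prod_nbr[aa' bb']]].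
  by rewrite IH => /andP[w1 w2]; rewrite (within_step aa' w1) (within_step bb' w2).
rewrite withinSE (withinSE e2) => /andP[].
case/orP=> [/eqP-> | /existsP[a' /andP[eaa' w1]]];
  case/orP=> [/eqP-> | /existsP[b' /andP[ebb' w2]]].
- exact: within_refl.
- apply: (within_step (z := (c, b'))); last by rewrite IH within_refl.
  by rewrite /strong_prod /= eqxx ebb' orbT.
- apply: (within_step (z := (a', d))); last by rewrite IH within_refl andbT.
  by rewrite /strong_prod /= eqxx eaa' !orbT.
- apply: (within_step (z := (a', b'))); last by rewrite IH w1.
  by rewrite /strong_prod /= eaa' ebb' !orbT.
Qed.

Hypotheses (conn1 : connected_graph e1) (conn2 : connected_graph e2).
Hypotheses (sym1 : symmetric e1) (sym2 : symmetric e2).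

Lemma dist_strong_prod a b c d :
  dist P (a, b) (c, d) = maxn (dist e1 a c) (dist e2 b d).
Proof.
apply: dist_within => [|n]; last first.
  by rewrite within_strong_prod !(within_dist_leq conn1, within_dist_leq conn2) geq_max.
rewrite card_prod gtn_max; apply/andP; split.
  rewrite (leq_trans (dist_lt_card conn1 a c)) // leq_pmulr //.
  by apply/card_gt0P; exists b.
rewrite (leq_trans (dist_lt_card conn2 b d)) // leq_pmull //.
by apply/card_gt0P; exists a.
Qed.

Lemma max_dist_strong_prodP u x v y :
  max_dist P (u, v) (x, y) <->
  (dist e2 v y <= dist e1 u x -> max_dist e1 u x) /\
  (dist e1 u x <= dist e2 v y -> max_dist e2 v y).
Proof.
rewrite /max_dist; set m := maxn (dist e1 u x) (dist e2 v y); split.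
  move=> uv_max; split=> le_d.
    move=> a eua; have := uv_max (a, v).
    rewrite /strong_prod /= eua eqxx orbT !dist_strong_prod geq_max.
    by rewrite (maxn_idPl le_d) => /(_ isT) /andP[].
  move=> b evb; have := uv_max (u, b).
  rewrite /strong_prod /= evb eqxx !dist_strong_prod geq_max.
  by rewrite (maxn_idPr le_d) => /(_ isT) /andP[].
case=> ux_max vy_max [a b] /strong_prod_nbr[ua vb]; rewrite !dist_strong_prod geq_max.
have bound1 : dist e1 x a <= m.
  case/orP: ua => [/eqP<- | eua]; first by rewrite (distC conn1 sym1) leq_maxl.
  case: (leqP (dist e2 v y) (dist e1 u x)) => [le_d | lt_d].
    by rewrite (leq_trans (ux_max le_d a eua)) ?leq_maxl.
  rewrite (leq_trans (dist_edge conn1 x eua)) // (distC conn1 sym1).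
  by rewrite (leq_trans lt_d) ?leq_maxr.
have bound2 : dist e2 y b <= m.
  case/orP: vb => [/eqP<- | evb]; first by rewrite (distC conn2 sym2) leq_maxr.
  case: (leqP (dist e1 u x) (dist e2 v y)) => [le_d | lt_d].
    by rewrite (leq_trans (vy_max le_d b evb)) ?leq_maxr.
  rewrite (leq_trans (dist_edge conn2 y evb)) // (distC conn2 sym2).
  by rewrite (leq_trans lt_d) ?leq_maxl.
by rewrite bound1 bound2.
Qed.

Lemma mutually_max_dist_strong_prodP u x v y :
  mutually_max_dist P (u, v) (x, y) <->
  (dist e2 v y <= dist e1 u x -> mutually_max_dist e1 u x) /\
  (dist e1 u x <= dist e2 v y -> mutually_max_dist e2 v y).
Proof.
rewrite /mutually_max_dist; split.
  case=> /max_dist_strong_prodP[ux1 vy1] /max_dist_strong_prodP[xu1 yv1].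
  rewrite (distC conn1 sym1 x) (distC conn2 sym2 y) in xu1 yv1.
  by split=> le_d; split; [exact: ux1 | exact: xu1 | exact: vy1 | exact: yv1].
case=> uxP vyP; split; apply/max_dist_strong_prodP;
  rewrite ?(distC conn1 sym1 x) ?(distC conn2 sym2 y);
  by split=> le_d; [case: (uxP le_d) | case: (vyP le_d)].
Qed.

End StrongProduct.

Theorem lemma6 (T1 T2 : finType) (e1 : rel T1) (e2 : rel T2)
  (sym1 : symmetric e1) (irr1 : irreflexive e1)
  (sym2 : symmetric e2) (irr2 : irreflexive e2)
  (conn1 : connected_graph e1) (conn2 : connected_graph e2)
  (nt1 : 1 < #|T1|) (nt2 : 1 < #|T2|)
  (u x : T1) (v y : T2) :
  mutually_max_dist (strong_prod e1 e2) (u, v) (x, y) <->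
  (mutually_max_dist e1 u x /\ mutually_max_dist e2 v y) \/
  (mutually_max_dist e1 u x /\ v = y) \/
  (mutually_max_dist e2 v y /\ u = x) \/
  (mutually_max_dist e1 u x /\ dist e2 v y < dist e1 u x) \/
  (mutually_max_dist e2 v y /\ dist e1 u x < dist e2 v y).
Proof.
have pos1 a b : mutually_max_dist e1 a b -> 0 < dist e1 a b.
  by case=> /(max_dist_gt0 conn1 irr1 nt1).
have pos2 a b : mutually_max_dist e2 a b -> 0 < dist e2 a b.
  by case=> /(max_dist_gt0 conn2 irr2 nt2).
apply: (iff_trans (mutually_max_dist_strong_prodP conn1 conn2 sym1 sym2 u x v y)).
split.
  case=> uxP vyP; case: (ltngtP (dist e1 u x) (dist e2 v y)) => cmp.
  - by do 4 right; split=> //; apply: vyP; exact: ltnW.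
  - by do 3 right; left; split=> //; apply: uxP; exact: ltnW.
  - by left; split; [apply: uxP | apply: vyP]; rewrite cmp.
case=> [[ux vy] | [[ux <-] | [[vy <-] | [[ux lt_d] | [vy lt_d]]]]]; split=> le_d //.
- by have := pos1 _ _ ux; rewrite ltnNge (leq_trans le_d) ?dist_xx.
- by have := pos2 _ _ vy; rewrite ltnNge (leq_trans le_d) ?dist_xx.
- by move: lt_d; rewrite ltnNge le_d.
- by move: lt_d; rewrite ltnNge le_d.
Qed.
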